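(* Let $q$ be a prime power and let $\mathcal W(5,q)$ be the symplectic polar space of ${\rm PG}(5,q)$ defined by the alternating form with Gram matrix $\begin{pmatrix} 0_3 & I_3\\ -I_3 & 0_3\end{pmatrix}$, with $\Pi_1=\langle U_4,U_5,U_6\rangle$ and $\Pi_2=\langle U_1,U_2,U_3\rangle$. Let $\mathcal P_0$ be the set of points $R$ of $\mathcal W(5,q)\setminus(\Pi_1\cup\Pi_2)$ such that the unique line through $R$ meeting both $\Pi_1$ and $\Pi_2$ is a line of $\mathcal W(5,q)$. If $\ell$ is a line of $\mathcal W(5,q)$ disjoint from $\Pi_1\cup\Pi_2$, then $|\ell\cap\mathcal P_0|\in\{1,q+1\}$ if $q$ is even, and $|\ell\cap\mathcal P_0|\in\{0,1,2\}$ if $q$ is odd.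
   Context: $U_i$ is the point with $1$ in position $i$ and $0$ elsewhere. All points of ${\rm PG}(5,q)$ are points of $\mathcal W(5,q)$; a line of $\mathcal W(5,q)$ is a totally isotropic line. *)

(* Projective space PG(5,q) over a finite field F (|F| = q),
   subspaces represented by row spaces of matrices over F (mxalgebra). *)
From HB Require Import structures.
From mathcomp Require Import all_boot all_order all_algebra all_field.
Set Implicit Arguments. Unset Strict Implicit. Unset Printing Implicit Defensive.
Import GRing.Theory.
Local Open Scope ring_scope.

Section W5q.
Variable F : finFieldType.

(* Gram matrix [[0_3, I_3], [-I_3, 0_3]] (indices 0..5; U_i is delta_mx 0 (i-1)) *)
Definition gramJ : 'M[F]_6 :=
  \matrix_(i < 6, j < 6)
     (if (i < 3)%N && (j == i + 3 :> nat) then 1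
      else if (3 <= i)%N && (i == j + 3 :> nat) then -1 else 0).

Definition symp (u v : 'rV[F]_6) : F := (u *m gramJ *m v^T) 0 0.

Definition tot_iso (X : 'M[F]_6) : bool := X *m gramJ *m X^T == 0.

Definition U (i : 'I_6) : 'rV[F]_6 := delta_mx 0 i.

Definition Pi1 : 'M[F]_6 := (\sum_(i : 'I_6 | (3 <= i)%N) <<U i>>)%MS.
Definition Pi2 : 'M[F]_6 := (\sum_(i : 'I_6 | (i < 3)%N) <<U i>>)%MS.

(* a point of PG(5,q), canonically represented by its generated matrix *)
Definition is_point (R : 'M[F]_6) : bool := (\rank R == 1%N) && (<<R>>%MS == R).

Definition is_line (L : 'M[F]_6) : bool := \rank L == 2%N.

Definition is_W_line (L : 'M[F]_6) : bool := is_line L && tot_iso L.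

Definition meets (X Y : 'M[F]_6) : bool := (X :&: Y)%MS != 0.

Definition P0 (R : 'M[F]_6) : bool :=
  [&& is_point R, ~~ (R <= Pi1)%MS, ~~ (R <= Pi2)%MS &
   [exists L : 'M[F]_6,
      [&& is_line L, (R <= L)%MS, meets L Pi1, meets L Pi2 & tot_iso L]]].

Definition card_P0_on (l : 'M[F]_6) : nat :=
  #|[set R : 'M[F]_6 | P0 R & (R <= l)%MS]|.

End W5q.

From mathcomp Require Import all_boot all_algebra all_field all_solvable.
From mathcomp Require Import ring.
Set Implicit Arguments. Unset Strict Implicit. Unset Printing Implicit Defensive.
Import GRing.Theory.
Local Open Scope ring_scope.

(* Write vectors of F^6 as (x, y) with x, y in F^3: then Pi1 is x = 0, Pi2 is y = 0 and the
   symplectic form is x.y' - y.x'.  A point <(x, y)> off Pi1 u Pi2 lies on the transversal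
   <(x, 0), (0, y)>, which is totally isotropic iff x.y = 0, so P0 is the hyperbolic quadric
   x.y = 0 minus Pi1 u Pi2.  On the line spanned by the rows (x_i, y_i) of B the quadric is the
   binary quadratic form with Gram matrix M_ij = x_i.y_j, symmetric when the line is totally
   isotropic, and nonzero when the line misses Pi1 and Pi2: the x_i and the y_i then span two
   planes of F^3, which cannot be orthogonal.  A nonzero binary form has at most 2 projective
   zeros in odd characteristic; in characteristic 2 the cross term vanishes and a s^2 + b t^2 is
   the square of a linear form (squaring is bijective), so it has 1 or q + 1 zeros. *)

Lemma ord2P (j : 'I_2) : j = 0 \/ j = 1.
Proof. by case: j => [[|[|//]]] lt_j; [left | right]; apply: val_inj. Qed.

Lemma card_option_set (T : finType) (P : pred (option T)) :
  #|[set o | P o]| = (P None + #|[set t | P (Some t)]|)%N.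
Proof.
rewrite (cardsD1 None) inE; congr (_ + _)%N.
rewrite -[RHS](card_imset _ (@Some_inj _)); apply: eq_card => -[t|].
  by rewrite !inE (mem_imset _ _ (@Some_inj _)) inE.
by rewrite !inE; apply/esym/imsetP => -[].
Qed.

Section ProjectiveLine.
Variable F : fieldType.

(* Homogeneous coordinates (1 : t) and (0 : 1) of the points of PG(1, F). *)
Definition pline_pt (o : option F) : 'rV[F]_2 :=
  \row_j (if o is Some t then [:: 1; t] else [:: 0; 1])`_j.

Lemma pline_pt_neq0 o : pline_pt o != 0.
Proof.
apply/rV0Pn; case: o => [t|]; [exists 0 | exists 1]; by rewrite mxE /= oner_eq0.
Qed.

Lemma pline_pt_inj o1 o2 : (pline_pt o1 <= pline_pt o2)%MS -> o1 = o2.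
Proof.
case/sub_rVP => k /rowP e; move: (e 0) (e 1); rewrite !mxE.
case: o1 o2 {e} => [s|] [t|] //=; rewrite ?mulr0 ?mulr1.
- by move=> <-; rewrite mul1r => ->.
- by move=> /eqP; rewrite oner_eq0.
- by move=> <-; rewrite mul0r => /eqP; rewrite oner_eq0.
Qed.

Lemma pline_pt_eqmx (c : 'rV[F]_2) : c != 0 -> exists o, (c == pline_pt o)%MS.
Proof.
move=> c_neq0; suff [o [k k_neq0 ->]] : exists o, exists2 k, k != 0 & c = k *: pline_pt o.
  by exists o; apply/eqmxP; apply: eqmx_scale.
have [c0 | c0] := eqVneq (c 0 0) 0.
  exists None, (c 0 1).
    by apply: contraNneq c_neq0 => c1; apply/eqP/rowP => j; rewrite mxE; case: (ord2P j) => ->.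
  by apply/rowP => j; rewrite !mxE; case: (ord2P j) => -> /=; rewrite ?c0 ?mulr0 ?mulr1.
exists (Some (c 0 1 / c 0 0)), (c 0 0) => //.
by apply/rowP => j; rewrite !mxE; case: (ord2P j) => -> /=; rewrite ?mulr1 // mulrC divfK.
Qed.

Lemma pline_pt_quad (M : 'M[F]_2) o :
  (pline_pt o *m M *m (pline_pt o)^T) 0 0 =
  if o is Some t then M 0 0 + (M 0 1 + M 1 0) * t + M 1 1 * t ^+ 2 else M 1 1.
Proof.
have idx : (ord0 = 0 :> 'I_2) * (lift ord0 ord0 = 1 :> 'I_2) by split; apply: val_inj.
case: o => [t|]; rewrite !mxE !big_ord_recl !big_ord0 !mxE !big_ord_recl !big_ord0 !mxE /=.
  by rewrite !idx; ring.
by rewrite !idx; ring.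
Qed.

End ProjectiveLine.

Section RowSpaces.
Variable F : fieldType.

Lemma mxrank_orthogonal m k n (X : 'M[F]_(m, n)) (Y : 'M[F]_(k, n)) :
  X *m Y^T = 0 -> (\rank X + \rank Y <= n)%N.
Proof.
move=> XY0; have /mxrankS : (Y <= kermx X^T)%MS.
  by apply/sub_kermxP; rewrite -[Y]trmxK -trmx_mul XY0 trmx0.
by rewrite mxrank_ker mxrank_tr leq_subRL ?rank_leq_col.
Qed.

Lemma sub_sum_delta n (P : pred 'I_n) (w : 'rV[F]_n) :
  (w <= \sum_(i | P i) <<delta_mx 0 i : 'rV[F]_n>>)%MS = [forall (j | ~~ P j), w 0 j == 0].
Proof.
apply/sub_sums_genmxP/forall_inP => [[u_ ->] j nPj | w0].
  rewrite summxE big1 // => i Pi; rewrite mxE big_ord1 mxE andTb.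
  by rewrite (_ : j == i = false) ?mulr0 //; apply: contraNF nPj => /eqP ->.
exists (fun i => (w 0 i)%:M); rewrite {1}[w]row_sum_delta (bigID P) /=.
rewrite [X in _ + X]big1 ?addr0 => [|j /w0/eqP->]; last by rewrite scale0r.
by apply: eq_bigr => i _; rewrite mul_scalar_mx.
Qed.

End RowSpaces.

Section FiniteField.
Variable F : finFieldType.

Lemma finField_pchar2E : ((2%:R : F) == 0) = ~~ odd #|F|.
Proof.
have [p p_pr pF] := finPcharP F.
have /p_natP[k oF] : p.-nat #|F|.
  by have := abelem_pgroup (fin_ring_pchar_abelem pF); rewrite /pgroup cardsT.
have k_gt0 : (0 < k)%N by case: k oF => // oF; have := finNzRing_gt1 F; rewrite oF.
have -> : ((2%:R : F) == 0) = (2 \in [pchar F]) by rewrite inE.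
rewrite (pcharf_eq pF) inE oF oddX -(prednK k_gt0) /=.
case: (even_prime p_pr) => [-> | p_odd] //; rewrite p_odd.
by apply/eqP => p2; rewrite -p2 in p_odd.
Qed.

Lemma card_sqrt_pchar2 (c : F) : (2%:R : F) == 0 -> #|[set t : F | t ^+ 2 == c]| = 1%N.
Proof.
move=> /eqP F2; have sqr_inj : injective (fun t : F => t ^+ 2).
  move=> s t /= st; apply/eqP; rewrite -subr_eq0 -sqrf_eq0.
  have -> : (s - t) ^+ 2 = s ^+ 2 - t ^+ 2 + 2%:R * (t ^+ 2 - s * t) by ring.
  by rewrite st F2 mul0r subrr addr0.
rewrite -[RHS](cards1 c) -[RHS](card_preimset _ sqr_inj).
by apply: eq_card => t; rewrite !inE.
Qed.

Lemma card_roots_lt_size (p : {poly F}) : p != 0 -> (#|[set t | root p t]| < size p)%N.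
Proof.
move=> p_neq0; rewrite cardE; apply: max_poly_roots => //; last exact: enum_uniq.
by apply/allP => t; rewrite mem_enum inE.
Qed.

Lemma card_quadratic_roots (a b c : F) : [|| a != 0, b != 0 | c != 0] ->
  (#|[set t : F | (a + b * t + c * t ^+ 2 == 0)%R]| <= (c != 0)%R.+1)%N.
Proof.
move=> abc_neq0; pose p := Poly [:: a; b; c].
have pE t : p.[t] = a + b * t + c * t ^+ 2.
  by rewrite horner_Poly /= mul0r add0r; ring.
have p_neq0 : p != 0.
  apply: contraTneq abc_neq0 => p0.
  have coef_p i : [:: a; b; c]`_i = 0 by rewrite -coef_Poly -/p p0 coef0.
  by move: (coef_p 0%N) (coef_p 1%N) (coef_p 2%N) => /= -> -> ->; rewrite eqxx.
have size_p : (size p <= (c != 0)%R.+2)%N.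
  apply/leq_sizeP => j; rewrite coef_Poly.
  by case: j => [|[|[|j]]] //=; rewrite ?nth_nil //; case: eqP.
have := card_roots_lt_size p_neq0.
under eq_finset => t do rewrite rootE pE.
by move=> lt_p; rewrite -ltnS (leq_trans lt_p size_p).
Qed.

Implicit Type M : 'M[F]_2.

Definition form_zeros M : {set option F} :=
  [set o | (pline_pt o *m M *m (pline_pt o)^T) 0 0 == 0].

Lemma card_form_zeros M : M^T = M ->
  #|form_zeros M| =
  ((M 1 1 == 0)%R + #|[set t : F | (M 0 0 + M 0 1 *+ 2 * t + M 1 1 * t ^+ 2 == 0)%R]|)%N.
Proof.
move=> symM; have M10 : M 1 0 = M 0 1 by rewrite -{1}symM mxE.
rewrite card_option_set /= pline_pt_quad; congr (_ + _)%N.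
by apply: eq_card => t; rewrite !inE pline_pt_quad M10 mulr2n.
Qed.

Lemma card_form_zeros_pchar2 M : M^T = M -> (2%:R : F) == 0 ->
  #|form_zeros M| \in [:: 1%N; #|F|.+1].
Proof.
move=> symM /eqP F2; rewrite card_form_zeros //.
under eq_finset => t do rewrite -mulr_natr F2 mulr0 mul0r addr0.
have [b0 | b_neq0] := eqVneq (M 1 1) 0.
  under eq_finset => t do rewrite b0 mul0r addr0.
  have [a0 | a_neq0] := eqVneq (M 0 0) 0; rewrite !inE.
    by rewrite (@cardsT F) eqxx orbT.
  by rewrite cards0.
suff -> : #|[set t : F | (M 0 0 + M 1 1 * t ^+ 2 == 0)%R]| = 1%N by [].
rewrite -[RHS](card_sqrt_pchar2 (- M 0 0 / M 1 1)) ?F2 //; apply: eq_card => t.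
rewrite !inE addrC addr_eq0 -[in RHS](inj_eq (mulfI b_neq0)).
by rewrite [M 1 1 * (_ / _)]mulrC divfK.
Qed.

Lemma card_form_zeros_odd M : M^T = M -> (2%:R : F) != 0 -> M != 0 ->
  (#|form_zeros M| <= 2)%N.
Proof.
move=> symM F2 M_neq0; rewrite card_form_zeros //.
have coefs_neq0 : [|| M 0 0 != 0, M 0 1 *+ 2 != 0 | M 1 1 != 0].
  apply: contraNT M_neq0; rewrite !negb_or !negbK -mulr_natr mulf_eq0 (negbTE F2) orbF.
  case/and3P => /eqP M00 /eqP M01 /eqP M11.
  have M10 : M 1 0 = 0 by rewrite -M01 -{1}symM mxE.
  by apply/eqP/matrixP => i j; rewrite mxE; case: (ord2P i) => ->; case: (ord2P j) => ->.
have := card_quadratic_roots coefs_neq0.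
by case: eqP.
Qed.

End FiniteField.

Section W5q.
Variable F : finFieldType.

(* [6] and [3 + 3] are only convertible, hence the explicit splittings [@lemma _ m 3 3] below. *)
Local Notation xpart A := (lsubmx (A : 'M[F]_(_, 3 + 3))).
Local Notation ypart A := (rsubmx (A : 'M[F]_(_, 3 + 3))).

Lemma gramJ_block : gramJ F = block_mx 0 1%:M (- 1%:M) 0 :> 'M_(3 + 3).
Proof.
apply/matrixP => i j; case: (split_ordP i) => i' ->; case: (split_ordP j) => j' ->.
all: rewrite ?block_mxEul ?block_mxEur ?block_mxEdl ?block_mxEdr !mxE /=.
all: by case: i' => [[|[|[|//]]] ?]; case: j' => [[|[|[|//]]] ?]; rewrite //= ?oppr0.
Qed.

Lemma mul_gramJ m k (A : 'M[F]_(m, 6)) (C : 'M[F]_(k, 6)) :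
  A *m gramJ F *m C^T = xpart A *m (ypart C)^T - ypart A *m (xpart C)^T.
Proof.
rewrite gramJ_block -{1}(@hsubmxK _ m 3 3 A) -{1}(@hsubmxK _ k 3 3 C).
rewrite (@mul_row_block _ m 3 3 3 3) (@tr_row_mx _ k 3 3) (@mul_row_col _ m 3 3 k).
by rewrite !mulmx0 !addr0 add0r mulmxN mulmx1 mulNmx mulmx1 addrC.
Qed.

Lemma sub_Pi1 (w : 'rV[F]_6) : (w <= Pi1 F)%MS = (xpart w == 0).
Proof.
rewrite /Pi1 /U sub_sum_delta; apply/forall_inP/eqP => [w0 | w0 i].
  by apply/rowP => j; rewrite !mxE; apply/eqP/w0; rewrite /= -ltnNge.
case: (@split_ordP 3 3 i) => j -> //= _.
by move/rowP: w0 => /(_ j); rewrite !mxE => ->.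
Qed.

Lemma sub_Pi2 (w : 'rV[F]_6) : (w <= Pi2 F)%MS = (ypart w == 0).
Proof.
rewrite /Pi2 /U sub_sum_delta; apply/forall_inP/eqP => [w0 | w0 i].
  by apply/rowP => j; rewrite !mxE; apply/eqP/w0.
case: (@split_ordP 3 3 i) => j -> //= _.
by move/rowP: w0 => /(_ j); rewrite !mxE => /eqP.
Qed.

Lemma Pi1_Pi2_disjoint (v : 'rV[F]_6) : (v <= Pi1 F)%MS -> (v <= Pi2 F)%MS -> v = 0.
Proof.
rewrite sub_Pi1 sub_Pi2 => /eqP v1 /eqP v2.
by rewrite -(@hsubmxK _ 1 3 3 v) v1 v2 row_mx0.
Qed.

Lemma mxrank_adds_Pi12 (y1 y2 : 'rV[F]_6) :
  (y1 <= Pi1 F)%MS -> (y2 <= Pi2 F)%MS -> y1 != 0 -> y2 != 0 -> \rank (y1 + y2)%MS = 2%N.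
Proof.
move=> y1Pi1 y2Pi2 y1_neq0 y2_neq0; rewrite mxrank_disjoint_sum ?rank_rV ?y1_neq0 ?y2_neq0 //.
apply/eqP/rowV0P => v; rewrite sub_capmx => /andP[vy1 vy2].
by apply: Pi1_Pi2_disjoint; [apply: submx_trans y1Pi1 | apply: submx_trans y2Pi2].
Qed.

Definition gram_xy m (B : 'M[F]_(m, 6)) : 'M[F]_m := xpart B *m (ypart B)^T.

Lemma gram_xyM k m (c : 'M[F]_(k, m)) (B : 'M[F]_(m, 6)) :
  gram_xy (c *m B) = c *m gram_xy B *m c^T.
Proof. by rewrite /gram_xy -mulmx_lsub -mulmx_rsub trmx_mul !mulmxA. Qed.

Lemma form_gram_xy m (A : 'M[F]_(m, 6)) : A *m gramJ F *m A^T = gram_xy A - (gram_xy A)^T.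
Proof. by rewrite mul_gramJ /gram_xy trmx_mul trmxK. Qed.

Lemma tot_iso_form (L : 'M[F]_6) m k (A : 'M[F]_(m, 6)) (C : 'M[F]_(k, 6)) :
  tot_iso L -> (A <= L)%MS -> (C <= L)%MS -> A *m gramJ F *m C^T = 0.
Proof.
move=> /eqP isoL /submxP[D ->] /submxP[E ->].
by rewrite trmx_mul !mulmxA -(mulmxA D) -(mulmxA D) isoL mulmx0 mul0mx.
Qed.

Lemma tot_iso_sub (L : 'M[F]_6) m (A : 'M[F]_(m, 6)) :
  (L <= A)%MS -> A *m gramJ F *m A^T = 0 -> tot_iso L.
Proof.
move=> /submxP[D ->] isoA; apply/eqP.
by rewrite trmx_mul !mulmxA -(mulmxA D) -(mulmxA D) isoA mulmx0 mul0mx.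
Qed.

Lemma gram_xy_sym (L : 'M[F]_6) m (B : 'M[F]_(m, 6)) :
  tot_iso L -> (B <= L)%MS -> (gram_xy B)^T = gram_xy B.
Proof.
by move=> isoL BL; apply/esym/eqP; rewrite -subr_eq0 -form_gram_xy (tot_iso_form isoL BL BL).
Qed.

Lemma row_free_xpart (L : 'M[F]_6) m (B : 'M[F]_(m, 6)) :
  ~~ meets L (Pi1 F) -> (B <= L)%MS -> row_free B -> row_free (xpart B).
Proof.
rewrite /meets negbK => /rowV0P L_Pi1 BL freeB; rewrite -kermx_eq0.
apply/rowV0P => c /sub_kermxP cX0; apply: (row_free_inj freeB); rewrite mul0mx /=.
apply: L_Pi1; rewrite sub_capmx (submx_trans (submxMl c B) BL) sub_Pi1.
by rewrite -(@mulmx_lsub _ 1 m 3 3); apply/eqP.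
Qed.

Lemma row_free_ypart (L : 'M[F]_6) m (B : 'M[F]_(m, 6)) :
  ~~ meets L (Pi2 F) -> (B <= L)%MS -> row_free B -> row_free (ypart B).
Proof.
rewrite /meets negbK => /rowV0P L_Pi2 BL freeB; rewrite -kermx_eq0.
apply/rowV0P => c /sub_kermxP cY0; apply: (row_free_inj freeB); rewrite mul0mx /=.
apply: L_Pi2; rewrite sub_capmx (submx_trans (submxMl c B) BL) sub_Pi2.
by rewrite -(@mulmx_rsub _ 1 m 3 3); apply/eqP.
Qed.

Lemma gram_xy_neq0 (B : 'M[F]_(2, 6)) :
  row_free (xpart B) -> row_free (ypart B) -> gram_xy B != 0.
Proof. by move=> /eqP freeX /eqP freeY; apply/eqP => /mxrank_orthogonal; rewrite freeX freeY. Qed.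

Lemma is_point_genmx (w : 'rV[F]_6) : w != 0 -> is_point <<w>>%MS.
Proof. by move=> w_neq0; rewrite /is_point genmx_id eqxx genmxE rank_rV w_neq0. Qed.

Lemma is_pointP (R : 'M[F]_6) : is_point R -> exists2 w : 'rV[F]_6, w != 0 & R = <<w>>%MS.
Proof.
case/andP=> /eqP rankR /eqP genR.
have /rowV0Pn[w wR w_neq0] : R != 0 by rewrite -mxrank_eq0 rankR.
exists w => //; rewrite -genR; apply/esym/genmxP.
by rewrite -(mxrank_leqif_eq wR).2 rankR rank_rV w_neq0.
Qed.

Lemma gram_xy_adds_Pi12 (L : 'M[F]_6) (y1 y2 w : 'rV[F]_6) :
  tot_iso L -> (y1 <= L)%MS -> (y2 <= L)%MS -> (y1 <= Pi1 F)%MS -> (y2 <= Pi2 F)%MS ->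
  (w <= y1 + y2)%MS -> gram_xy w = 0.
Proof.
move=> isoL y1L y2L; rewrite sub_Pi1 sub_Pi2 => /eqP y1_x0 /eqP y2_y0 /sub_addsmxP[[a b] /= ->].
have y2_y1_orth : xpart y2 *m (ypart y1)^T = 0.
  by have := tot_iso_form isoL y2L y1L; rewrite mul_gramJ y2_y0 mul0mx subr0.
rewrite /gram_xy !linearD /= -!(@mulmx_lsub _ 1 1 3 3) -!(@mulmx_rsub _ 1 1 3 3).
rewrite y1_x0 y2_y0 !mulmx0 add0r trmx0 mulmx0 addr0 trmx_mul mulmxA -(mulmxA b).
by rewrite y2_y1_orth mulmx0 mul0mx.
Qed.

Definition foot1 (w : 'rV[F]_6) : 'rV[F]_6 := row_mx (0 : 'rV_3) (ypart w).
Definition foot2 (w : 'rV[F]_6) : 'rV[F]_6 := row_mx (xpart w) (0 : 'rV_3).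

Lemma foot1_Pi1 w : (foot1 w <= Pi1 F)%MS.
Proof. by rewrite sub_Pi1 row_mxKl. Qed.

Lemma foot2_Pi2 w : (foot2 w <= Pi2 F)%MS.
Proof. by rewrite sub_Pi2 row_mxKr. Qed.

Lemma foot1_eq0 w : (foot1 w == 0) = (ypart w == 0).
Proof. by rewrite /foot1 (@row_mx_eq0 _ 1 3 3) eqxx. Qed.

Lemma foot2_eq0 w : (foot2 w == 0) = (xpart w == 0).
Proof. by rewrite /foot2 (@row_mx_eq0 _ 1 3 3) eqxx andbT. Qed.

Lemma add_feet w : foot1 w + foot2 w = w.
Proof. by rewrite /foot1 /foot2 (@add_row_mx _ 1 3 3) add0r addr0 hsubmxK. Qed.

Lemma tot_iso_transversal w : gram_xy w 0 0 = 0 -> tot_iso (foot1 w + foot2 w)%MS.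
Proof.
move=> gram_w0; apply: (@tot_iso_sub _ _ (col_mx (foot1 w) (foot2 w))); first by rewrite addsmxE.
rewrite form_gram_xy (_ : gram_xy _ = 0) ?trmx0 ?subr0 //.
rewrite (_ : col_mx _ _ = block_mx 0 (ypart w) (xpart w) 0) // /gram_xy block_mxEh.
rewrite row_mxKl row_mxKr tr_col_mx mul_col_row trmx0 !mulmx0 !mul0mx.
rewrite (_ : xpart w *m (ypart w)^T = 0) ?block_mx0 //.
by apply/matrixP => i j; rewrite !ord1 [RHS]mxE.
Qed.

Lemma P0_genmx (w : 'rV[F]_6) :
  xpart w != 0 -> ypart w != 0 -> P0 <<w>>%MS = (gram_xy w 0 0 == 0).
Proof.
move=> x_neq0 y_neq0; have w_neq0 : w != 0 by apply: contraNneq x_neq0 => ->; rewrite linear0.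
rewrite /P0 is_point_genmx // !genmxE sub_Pi1 sub_Pi2 x_neq0 y_neq0 /=.
apply/existsP/eqP => [[L] | gram_w0].
  case/and5P => /eqP rankL wL /rowV0Pn[y1 + y1_neq0] /rowV0Pn[y2 + y2_neq0] isoL.
  rewrite !sub_capmx => /andP[y1L y1Pi1] /andP[y2L y2Pi2].
  have y12L : (y1 + y2 <= L)%MS by rewrite addsmx_sub y1L y2L.
  have /andP[_ Ly12] : (y1 + y2 == L)%MS.
    by rewrite -(mxrank_leqif_eq y12L).2 rankL mxrank_adds_Pi12.
  rewrite genmxE in wL; have := submx_trans wL Ly12.
  by move/(gram_xy_adds_Pi12 isoL y1L y2L y1Pi1 y2Pi2) => ->; rewrite mxE.
have foot1_neq0 : foot1 w != 0 by rewrite foot1_eq0.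
have foot2_neq0 : foot2 w != 0 by rewrite foot2_eq0.
exists (foot1 w + foot2 w)%MS; apply/and5P; split.
- by rewrite /is_line mxrank_adds_Pi12 ?foot1_Pi1 ?foot2_Pi2.
- by rewrite genmxE -{1}(add_feet w) addmx_sub_adds.
- by apply/rowV0Pn; exists (foot1 w); rewrite // sub_capmx addsmxSl foot1_Pi1.
- by apply/rowV0Pn; exists (foot2 w); rewrite // sub_capmx addsmxSr foot2_Pi2.
exact: tot_iso_transversal gram_w0.
Qed.

Lemma card_points_on_line (P : pred 'M[F]_6) (B : 'M[F]_(2, 6)) :
  row_free B -> (forall R, P R -> is_point R) ->
  #|[set R | P R & (R <= B)%MS]| = #|[set o | P <<pline_pt o *m B>>%MS]|.
Proof.
move=> freeB P_point.
have pt_inj : injective (fun o => <<pline_pt o *m B>>%MS).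
  move=> o1 o2 /= /genmxP/andP[+ _]; rewrite submxMfree //; exact: pline_pt_inj.
rewrite -[RHS](card_imset _ pt_inj); apply: eq_card => R; rewrite !inE.
apply/andP/imsetP => [[PR] | [o + ->]]; last by rewrite inE genmxE submxMl.
have [w w_neq0 Rw] := is_pointP (P_point R PR); rewrite Rw genmxE => /submxP[c wE].
have c_neq0 : c != 0 by apply: contraNneq w_neq0 => c0; rewrite wE c0 mul0mx.
have [o /eqmxP c_pt] := pline_pt_eqmx c_neq0.
have Rpt : <<w>>%MS = <<pline_pt o *m B>>%MS by rewrite wE; apply/genmxP/eqmxP/eqmxMr.
by exists o; rewrite // inE -Rpt -Rw.
Qed.

Lemma card_P0_on_line (l : 'M[F]_6) (B : 'M[F]_(2, 6)) :
  (B :=: l)%MS -> row_free B -> ~~ meets l (Pi1 F) -> ~~ meets l (Pi2 F) ->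
  card_P0_on l = #|form_zeros (gram_xy B)|.
Proof.
move=> eqBl freeB l_Pi1 l_Pi2; have Bl : (B <= l)%MS by rewrite eqBl.
have freeX := row_free_xpart l_Pi1 Bl freeB; have freeY := row_free_ypart l_Pi2 Bl freeB.
rewrite /card_P0_on; under eq_finset => R do rewrite -eqBl.
rewrite card_points_on_line // => [|R /and4P[] //]; apply: eq_card => o; rewrite !inE.
have pt_neq0 m (X : 'M[F]_(2, m)) : row_free X -> pline_pt o *m X != 0.
  move=> freeX'; apply: contraNneq (pline_pt_neq0 o) => ptX0.
  by apply/eqP/(row_free_inj freeX'); rewrite mul0mx.
rewrite P0_genmx ?gram_xyM //.
  by rewrite -(@mulmx_lsub _ 1 2 3 3) pt_neq0.
by rewrite -(@mulmx_rsub _ 1 2 3 3) pt_neq0.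
Qed.

End W5q.

Unset Implicit Arguments.

Theorem mainTheorem12 (F : finFieldType) (l : 'M[F]_6) :
  is_W_line l -> ~~ meets l (Pi1 F) -> ~~ meets l (Pi2 F) ->
  (~~ odd #|F| -> card_P0_on l \in [:: 1%N; #|F|.+1]) /\
  (odd #|F| -> card_P0_on l \in [:: 0%N; 1%N; 2%N]).
Proof.
case/andP => /eqP rank_l iso_l l_Pi1 l_Pi2.
have [B eqBl] : exists B : 'M[F]_(2, 6), (B :=: l)%MS.
  by move: (row_base l) (eq_row_base l); rewrite rank_l => B; exists B.
have freeB : row_free B by rewrite /row_free eqBl rank_l.
have Bl : (B <= l)%MS by rewrite eqBl.
have symM := gram_xy_sym iso_l Bl.
rewrite (card_P0_on_line eqBl) //; split => [F_even | F_odd].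
  by apply: card_form_zeros_pchar2; rewrite ?finField_pchar2E.
have M_neq0 := gram_xy_neq0 (row_free_xpart l_Pi1 Bl freeB) (row_free_ypart l_Pi2 Bl freeB).
have := card_form_zeros_odd symM _ M_neq0; rewrite finField_pchar2E F_odd => /(_ isT).
by rewrite !inE; case: #|_| => [|[|[|]]].
Qed.
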